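(* Assume $\delta_1:=\alpha_1-\alpha_2-\gamma_2>0$, $\delta_2:=\alpha_1-\alpha_3+\eta_1>0$ and $\frac{\mu_4'-\mu_0}{\alpha_1}<\frac12\sigma_1$. For $K>K^*:=\frac{b\sigma_1}{b-\mu_0}$ let $G_3(K)=(S^*,I_1^*,0,0,R^* )$ be the unique equilibrium of the system below with positive $S^*,I_1^*,R^*$, and define $$P_1(K)=\delta_1I_1^*+\alpha_2(\sigma_1-\sigma_2),\quad Q_1(K)=\delta_2I_1^*+\alpha_3(\sigma_1-\sigma_3),\quad U_1(K)=\beta_2(\gamma_1+\gamma_2)S^*I_1^*,$$ $\Delta_1(K)=P_1(K)Q_1(K)-U_1(K)$. Then $P_1$ and $Q_1$ are strictly increasing in $K$, $U_1$ is strictly increasing in $K$, and on every interval $J\subset(K^*,\infty)$ on which $P_1<0$ and $Q_1<0$, the function $\Delta_1$ is strictly decreasing. Moreover $\Delta_1(K)\to\alpha_2\alpha_3(\sigma_2-\sigma_1)(\sigma_3-\sigma_1)>0$ as $K\downarrow K^*$.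
   Context: Consider, for $t\ge0$, the system $S'=\big(b(1-\tfrac{N}{K})-\alpha_1I_1-\alpha_2I_2-(\beta_1+\beta_2+\alpha_3)I_{12}-\mu_0\big)S$, $I_1'=\big(b(1-\tfrac{N}{K})+\alpha_1S-\eta_1I_{12}-\gamma_1I_2-\mu_1\big)I_1+\beta_1SI_{12}$, $I_2'=\big(b(1-\tfrac{N}{K})+\alpha_2S-\eta_2I_{12}-\gamma_2I_1-\mu_2\big)I_2+\beta_2SI_{12}$, $I_{12}'=\big(b(1-\tfrac{N}{K})+\alpha_3S+\eta_1I_1+\eta_2I_2-\mu_3\big)I_{12}+(\gamma_1+\gamma_2)I_1I_2$, $R'=\big(b(1-\tfrac{N}{K})-\mu_4'\big)R+\rho_1I_1+\rho_2I_2+\rho_3I_{12}$, where $N=S+I_1+I_2+I_{12}+R$. All parameters $b,K,\alpha_i,\beta_i,\gamma_i,\eta_i,\rho_i,\mu_0,\mu_i'$ are positive and $\mu_i=\rho_i+\mu_i'$ for $i=1,2,3$; $K$ is regarded as a varying parameter, the others fixed. Standing assumptions: $b>\mu_0$, $b>\mu_i$ ($i=1,2,3$), $b>\mu_4'$, and $\mu_0<\mu_4'<\mu_j'$ for $j=1,2,3$. Set $\sigma_k=(\mu_k-\mu_0)/\alpha_k$ ($k=1,2,3$), assumed to satisfy $\sigma_1<\sigma_2<\sigma_3$, and $S^{**}=\frac{K}{b}(b-\mu_0)$. *)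

From Stdlib Require Import Reals.
From Coquelicot Require Import Coquelicot.
Open Scope R_scope.

Record params := Params {
  b : R;
  alpha1 : R; alpha2 : R; alpha3 : R;
  beta1 : R; beta2 : R;
  gamma1 : R; gamma2 : R;
  eta1 : R; eta2 : R;
  rho1 : R; rho2 : R; rho3 : R;
  mu0 : R;
  mu1' : R; mu2' : R; mu3' : R; mu4' : R
}.

Definition mu1 (p : params) := rho1 p + mu1' p.
Definition mu2 (p : params) := rho2 p + mu2' p.
Definition mu3 (p : params) := rho3 p + mu3' p.

Definition sigma1 (p : params) := (mu1 p - mu0 p) / alpha1 p.
Definition sigma2 (p : params) := (mu2 p - mu0 p) / alpha2 p.
Definition sigma3 (p : params) := (mu3 p - mu0 p) / alpha3 p.

Definition logi (p : params) (K S I1 I2 I12 Rr : R) :=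
  b p * (1 - (S + I1 + I2 + I12 + Rr) / K).

Definition fS p K S I1 I2 I12 Rr :=
  (logi p K S I1 I2 I12 Rr - alpha1 p * I1 - alpha2 p * I2
   - (beta1 p + beta2 p + alpha3 p) * I12 - mu0 p) * S.
Definition fI1 p K S I1 I2 I12 Rr :=
  (logi p K S I1 I2 I12 Rr + alpha1 p * S - eta1 p * I12 - gamma1 p * I2 - mu1 p) * I1
  + beta1 p * S * I12.
Definition fI2 p K S I1 I2 I12 Rr :=
  (logi p K S I1 I2 I12 Rr + alpha2 p * S - eta2 p * I12 - gamma2 p * I1 - mu2 p) * I2
  + beta2 p * S * I12.
Definition fI12 p K S I1 I2 I12 Rr :=
  (logi p K S I1 I2 I12 Rr + alpha3 p * S + eta1 p * I1 + eta2 p * I2 - mu3 p) * I12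
  + (gamma1 p + gamma2 p) * I1 * I2.
Definition fR p K S I1 I2 I12 Rr :=
  (logi p K S I1 I2 I12 Rr - mu4' p) * Rr + rho1 p * I1 + rho2 p * I2 + rho3 p * I12.

Definition is_equilibrium p K S I1 I2 I12 Rr : Prop :=
  fS p K S I1 I2 I12 Rr = 0 /\ fI1 p K S I1 I2 I12 Rr = 0 /\
  fI2 p K S I1 I2 I12 Rr = 0 /\ fI12 p K S I1 I2 I12 Rr = 0 /\
  fR p K S I1 I2 I12 Rr = 0.

Definition all_params_pos (p : params) : Prop :=
  0 < b p /\ 0 < alpha1 p /\ 0 < alpha2 p /\ 0 < alpha3 p /\
  0 < beta1 p /\ 0 < beta2 p /\ 0 < gamma1 p /\ 0 < gamma2 p /\
  0 < eta1 p /\ 0 < eta2 p /\ 0 < rho1 p /\ 0 < rho2 p /\ 0 < rho3 p /\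
  0 < mu0 p /\ 0 < mu1' p /\ 0 < mu2' p /\ 0 < mu3' p /\ 0 < mu4' p.

Definition standing (p : params) : Prop :=
  mu0 p < b p /\ mu1 p < b p /\ mu2 p < b p /\ mu3 p < b p /\ mu4' p < b p /\
  mu0 p < mu4' p /\ mu4' p < mu1' p /\ mu4' p < mu2' p /\ mu4' p < mu3' p /\
  sigma1 p < sigma2 p /\ sigma2 p < sigma3 p.

Definition Kstar (p : params) := b p * sigma1 p / (b p - mu0 p).
Definition delta1 (p : params) := alpha1 p - alpha2 p - gamma2 p.
Definition delta2 (p : params) := alpha1 p - alpha3 p + eta1 p.

(* Write (S, I, R) for the coordinates of G3.  The equations for S, I1 and R
   reduce to S + I = sigma1, R (mu4' - mu0 - alpha1 I) = rho1 I and
   K (b - mu0 - alpha1 I) = b (sigma1 + R).  The last two make K a strictly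
   increasing function of I that equals K* at I = 0, so I increases with K and
   tends to 0 as K decreases to K*.  P1 and Q1 are then increasing affine
   functions of I, U1 = c (sigma1 - I) I increases because the hypothesis on
   mu4' keeps I below sigma1 / 2, and Delta1 is a polynomial in I whose value
   at 0 is the announced limit. *)

From Stdlib Require Import Reals Lra.
From Coquelicot Require Import Coquelicot.
Open Scope R_scope.

Section EquilibriumG3.

Variable p : params.
Hypothesis alpha1_gt0 : 0 < alpha1 p.
Hypothesis rho1_gt0 : 0 < rho1 p.

Variables K S I Rr : R.
Hypothesis K_gt0 : 0 < K.
Hypothesis Heq : is_equilibrium p K S I 0 0 Rr.
Hypothesis S_gt0 : 0 < S.
Hypothesis I_gt0 : 0 < I.

Lemma equilibrium_logi_I : logi p K S I 0 0 Rr = alpha1 p * I + mu0 p.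
Proof.
destruct Heq as [HfS _].
replace (fS p K S I 0 0 Rr) with ((logi p K S I 0 0 Rr - alpha1 p * I - mu0 p) * S)
  in HfS by (unfold fS; ring).
destruct (Rmult_integral _ _ HfS); lra.
Qed.

Lemma equilibrium_logi_S : logi p K S I 0 0 Rr = mu1 p - alpha1 p * S.
Proof.
destruct Heq as [_ [HfI _]].
replace (fI1 p K S I 0 0 Rr) with ((logi p K S I 0 0 Rr + alpha1 p * S - mu1 p) * I)
  in HfI by (unfold fI1; ring).
destruct (Rmult_integral _ _ HfI); lra.
Qed.

Lemma equilibrium_S_add_I : S + I = sigma1 p.
Proof.
pose proof equilibrium_logi_I; pose proof equilibrium_logi_S.
unfold sigma1; apply (Rmult_eq_reg_l (alpha1 p)); [field_simplify|]; lra.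
Qed.

Lemma equilibrium_R : Rr * (mu4' p - mu0 p - alpha1 p * I) = rho1 p * I.
Proof.
destruct Heq as (_ & _ & _ & _ & HfR); unfold fR in HfR.
rewrite equilibrium_logi_I in HfR; lra.
Qed.

Lemma equilibrium_I_lt (R_gt0 : 0 < Rr) : alpha1 p * I < mu4' p - mu0 p.
Proof.
pose proof equilibrium_R.
assert (0 < rho1 p * I) by nra.
nra.
Qed.

Lemma equilibrium_K : K * (b p - mu0 p - alpha1 p * I) = b p * (sigma1 p + Rr).
Proof.
replace (b p - mu0 p - alpha1 p * I) with (b p - logi p K S I 0 0 Rr)
  by (rewrite equilibrium_logi_I; ring).
rewrite <- equilibrium_S_add_I; unfold logi.
field; lra.
Qed.

End EquilibriumG3.

Lemma logistic_lt (s x y : R) : x < y -> x + y < s -> (s - x) * x < (s - y) * y.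
Proof. intros; nra. Qed.

Lemma mul_neg_lt (p1 p2 q1 q2 : R) :
  p1 < p2 -> q1 < q2 -> p2 < 0 -> q2 < 0 -> p2 * q2 < p1 * q1.
Proof. intros; nra. Qed.

Section BranchG3.

Variable p : params.
Hypothesis Hpos : all_params_pos p.
Hypothesis Hst : standing p.
Hypothesis Hmu : (mu4' p - mu0 p) / alpha1 p < sigma1 p / 2.

Variables Sst Ist Rst : R -> R.
Hypothesis HG3 : forall K, Kstar p < K ->
  is_equilibrium p K (Sst K) (Ist K) 0 0 (Rst K) /\
  0 < Sst K /\ 0 < Ist K /\ 0 < Rst K.

Lemma sigma1_gt0 : 0 < sigma1 p.
Proof.
pose proof Hpos as (_ & ? & _ & _ & _ & _ & _ & _ & _ & _ & ? & _).
pose proof Hst as (_ & _ & _ & _ & _ & ? & ? & _).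
unfold sigma1, mu1 in *; apply Rdiv_lt_0_compat; lra.
Qed.

Lemma Kstar_gt0 : 0 < Kstar p.
Proof.
pose proof sigma1_gt0; pose proof Hpos as [Hb _]; pose proof Hst as [? _].
unfold Kstar; apply Rdiv_lt_0_compat; nra.
Qed.

Let b_gt0 : 0 < b p := proj1 Hpos.
Let alpha1_gt0 : 0 < alpha1 p := proj1 (proj2 Hpos).
Let rho1_gt0 : 0 < rho1 p.
Proof. now pose proof Hpos as (_ & _ & _ & _ & _ & _ & _ & _ & _ & _ & ? & _). Qed.

Lemma Sst_add_Ist K : Kstar p < K -> Sst K + Ist K = sigma1 p.
Proof.
intros HK; destruct (HG3 K HK) as (Heq & HS & HI & _).
exact (equilibrium_S_add_I p alpha1_gt0 K _ _ _ Heq HS HI).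
Qed.

Lemma Rst_relation K : Kstar p < K ->
  Rst K * (mu4' p - mu0 p - alpha1 p * Ist K) = rho1 p * Ist K.
Proof.
intros HK; destruct (HG3 K HK) as (Heq & HS & _).
exact (equilibrium_R p K _ _ _ Heq HS).
Qed.

Lemma K_relation K : Kstar p < K ->
  K * (b p - mu0 p - alpha1 p * Ist K) = b p * (sigma1 p + Rst K).
Proof.
intros HK; pose proof Kstar_gt0; destruct (HG3 K HK) as (Heq & HS & HI & _).
exact (equilibrium_K p alpha1_gt0 K _ _ _ ltac:(lra) Heq HS HI).
Qed.

Lemma Ist_gt0 K : Kstar p < K -> 0 < Ist K.
Proof. intros HK; apply (HG3 K HK). Qed.

Lemma Rst_gt0 K : Kstar p < K -> 0 < Rst K.
Proof. intros HK; apply (HG3 K HK). Qed.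

Lemma alpha1_Ist_lt K : Kstar p < K -> alpha1 p * Ist K < mu4' p - mu0 p.
Proof.
intros HK; destruct (HG3 K HK) as (Heq & HS & HI & HR).
exact (equilibrium_I_lt p rho1_gt0 K _ _ _ Heq HS HI HR).
Qed.

Lemma Ist_lt_half_sigma1 K : Kstar p < K -> Ist K < sigma1 p / 2.
Proof.
intros HK; pose proof (alpha1_Ist_lt K HK).
assert (mu4' p - mu0 p < alpha1 p * (sigma1 p / 2)).
{ apply (Rmult_lt_compat_l (alpha1 p)) in Hmu; [|lra].
  replace (alpha1 p * ((mu4' p - mu0 p) / alpha1 p)) with (mu4' p - mu0 p)
    in Hmu by (field; lra).
  exact Hmu. }
nra.
Qed.

(* If I did not increase, neither would R = rho1 I / (mu4' - mu0 - alpha1 I),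
   nor K = b (sigma1 + R) / (b - mu0 - alpha1 I). *)
Lemma Ist_increasing K1 K2 : Kstar p < K1 -> K1 < K2 -> Ist K1 < Ist K2.
Proof.
intros HK1 HK12; assert (HK2 : Kstar p < K2) by lra.
pose proof (Ist_gt0 K2 HK2); pose proof (Rst_gt0 K1 HK1); pose proof (Rst_gt0 K2 HK2).
pose proof (alpha1_Ist_lt K1 HK1); pose proof (alpha1_Ist_lt K2 HK2).
pose proof (Rst_relation K1 HK1); pose proof (Rst_relation K2 HK2).
pose proof (K_relation K1 HK1); pose proof (K_relation K2 HK2).
pose proof Kstar_gt0; pose proof b_gt0; pose proof alpha1_gt0; pose proof rho1_gt0.
pose proof Hst as (_ & _ & _ & _ & ? & _).
destruct (Rlt_or_le (Ist K1) (Ist K2)) as [| HI]; [assumption | exfalso].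
assert (HaI : alpha1 p * Ist K2 <= alpha1 p * Ist K1)
  by (apply Rmult_le_compat_l; lra).
assert (HR : Rst K2 <= Rst K1).
{ assert (rho1 p * Ist K2 <= rho1 p * Ist K1) by (apply Rmult_le_compat_l; lra).
  assert (Rst K1 * (mu4' p - mu0 p - alpha1 p * Ist K1)
          <= Rst K1 * (mu4' p - mu0 p - alpha1 p * Ist K2))
    by (apply Rmult_le_compat_l; lra).
  apply (Rmult_le_reg_r (mu4' p - mu0 p - alpha1 p * Ist K2)); lra. }
nra.
Qed.

Lemma Sst_mul_Ist_increasing K1 K2 :
  Kstar p < K1 -> K1 < K2 -> Sst K1 * Ist K1 < Sst K2 * Ist K2.
Proof.
intros HK1 HK12; assert (HK2 : Kstar p < K2) by lra.
replace (Sst K1) with (sigma1 p - Ist K1) by (pose proof (Sst_add_Ist K1 HK1); lra).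
replace (Sst K2) with (sigma1 p - Ist K2) by (pose proof (Sst_add_Ist K2 HK2); lra).
pose proof (Ist_increasing K1 K2 HK1 HK12); pose proof (Ist_lt_half_sigma1 K2 HK2).
apply logistic_lt; lra.
Qed.

Lemma Ist_le_K_sub_Kstar K :
  Kstar p < K -> alpha1 p * Kstar p * Ist K <= (b p - mu0 p) * (K - Kstar p).
Proof.
intros HK; pose proof (Ist_gt0 K HK); pose proof (Rst_gt0 K HK).
pose proof (K_relation K HK); pose proof Kstar_gt0.
assert (Kstar p * (b p - mu0 p) = b p * sigma1 p).
{ pose proof Hst as [? _]; unfold Kstar; field; lra. }
assert (0 <= (K - Kstar p) * (alpha1 p * Ist K)) by (apply Rmult_le_pos; nra).
nra.
Qed.

Lemma Ist_cvg_0 : filterlim Ist (at_right (Kstar p)) (locally 0).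
Proof.
pose proof Kstar_gt0.
pose proof Hpos as (_ & Ha1 & _); pose proof Hst as [? _].
set (c := alpha1 p * Kstar p / (b p - mu0 p)).
assert (Hc : 0 < c) by (apply Rdiv_lt_0_compat; nra).
apply filterlim_locally; intros eps.
assert (Hd : 0 < eps * c) by (apply Rmult_lt_0_compat; [apply cond_pos | exact Hc]).
exists (mkposreal _ Hd); intros K HK_near HK; simpl in HK_near.
change (Rabs (Ist K - 0) < eps); change (Rabs (K - Kstar p) < eps * c) in HK_near.
pose proof (Ist_gt0 K HK); pose proof (Ist_le_K_sub_Kstar K HK).
rewrite Rabs_pos_eq in HK_near by lra; rewrite Rminus_0_r, Rabs_pos_eq by lra.
assert (c * Ist K <= K - Kstar p).
{ apply (Rmult_le_reg_r (b p - mu0 p)); [lra|].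
  unfold c; field_simplify; lra. }
nra.
Qed.

Lemma quadratic_in_Ist_cvg (a1 c1 a2 c2 c : R) :
  filterlim (fun K => (a1 * Ist K + c1) * (a2 * Ist K + c2) - c * Sst K * Ist K)
    (at_right (Kstar p)) (locally (c1 * c2)).
Proof.
set (h := fun x => (a1 * x + c1) * (a2 * x + c2) - c * (sigma1 p - x) * x).
apply (filterlim_ext_loc (fun K => h (Ist K))).
{ exists (mkposreal 1 Rlt_0_1); intros K _ HK.
  pose proof (Sst_add_Ist K HK).
  unfold h; replace (Sst K) with (sigma1 p - Ist K) by lra; ring. }
apply (filterlim_comp _ _ _ Ist h _ (locally 0)); [exact Ist_cvg_0|].
replace (c1 * c2) with (h 0) by (unfold h; ring).
apply (continuity_pt_filterlim h 0); unfold h; reg.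
Qed.

End BranchG3.

Theorem mainTheorem12 (p : params) (Hpos : all_params_pos p) (Hst : standing p)
  (Hd1 : 0 < delta1 p) (Hd2 : 0 < delta2 p)
  (Hmu : (mu4' p - mu0 p) / alpha1 p < sigma1 p / 2)
  (Sst Ist Rst : R -> R)
  (HG3 : forall K, Kstar p < K ->
     is_equilibrium p K (Sst K) (Ist K) 0 0 (Rst K) /\
     0 < Sst K /\ 0 < Ist K /\ 0 < Rst K) :
  let P1 := fun K => delta1 p * Ist K + alpha2 p * (sigma1 p - sigma2 p) in
  let Q1 := fun K => delta2 p * Ist K + alpha3 p * (sigma1 p - sigma3 p) in
  let U1 := fun K => beta2 p * (gamma1 p + gamma2 p) * Sst K * Ist K in
  let D1 := fun K => P1 K * Q1 K - U1 K in
  let L := alpha2 p * alpha3 p * (sigma2 p - sigma1 p) * (sigma3 p - sigma1 p) in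
  (forall K1 K2, Kstar p < K1 -> K1 < K2 -> P1 K1 < P1 K2) /\
  (forall K1 K2, Kstar p < K1 -> K1 < K2 -> Q1 K1 < Q1 K2) /\
  (forall K1 K2, Kstar p < K1 -> K1 < K2 -> U1 K1 < U1 K2) /\
  (forall J : R -> Prop,
     (forall x y z, J x -> J z -> x <= y -> y <= z -> J y) ->
     (forall K, J K -> Kstar p < K) ->
     (forall K, J K -> P1 K < 0 /\ Q1 K < 0) ->
     forall K1 K2, J K1 -> J K2 -> K1 < K2 -> D1 K2 < D1 K1) /\
  filterlim D1 (at_right (Kstar p)) (locally L) /\ 0 < L.
Proof.
intros P1 Q1 U1 D1 L.
pose proof Hpos as (_ & _ & Ha2 & Ha3 & _ & Hb2 & Hg1 & Hg2 & _).
pose proof Hst as (_ & _ & _ & _ & _ & _ & _ & _ & _ & Hs12 & Hs23).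
pose proof (Ist_increasing p Hpos Hst Sst Ist Rst HG3) as Imono.
assert (HP : forall K1 K2, Kstar p < K1 -> K1 < K2 -> P1 K1 < P1 K2).
{ intros K1 K2 ? ?; pose proof (Imono K1 K2); unfold P1; nra. }
assert (HQ : forall K1 K2, Kstar p < K1 -> K1 < K2 -> Q1 K1 < Q1 K2).
{ intros K1 K2 ? ?; pose proof (Imono K1 K2); unfold Q1; nra. }
assert (HU : forall K1 K2, Kstar p < K1 -> K1 < K2 -> U1 K1 < U1 K2).
{ intros K1 K2 HK1 HK12; unfold U1.
  pose proof (Sst_mul_Ist_increasing p Hpos Hst Hmu Sst Ist Rst HG3 K1 K2 HK1 HK12).
  assert (0 < beta2 p * (gamma1 p + gamma2 p)) by nra.
  nra. }
repeat split; try assumption.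
- intros J _ HJK HJ K1 K2 HJ1 HJ2 HK12; unfold D1.
  destruct (HJ K1 HJ1), (HJ K2 HJ2).
  pose proof (mul_neg_lt _ _ _ _ (HP K1 K2 (HJK K1 HJ1) HK12)
                (HQ K1 K2 (HJK K1 HJ1) HK12) ltac:(assumption) ltac:(assumption)).
  pose proof (HU K1 K2 (HJK K1 HJ1) HK12); lra.
- replace L with ((alpha2 p * (sigma1 p - sigma2 p)) * (alpha3 p * (sigma1 p - sigma3 p)))
    by (unfold L; ring).
  exact (quadratic_in_Ist_cvg p Hpos Hst Sst Ist Rst HG3 _ _ _ _ _).
- unfold L; apply Rmult_lt_0_compat; [apply Rmult_lt_0_compat; [nra|]|]; lra.
Qed.
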